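(* For an information-lossless FS encoder with side information, the joint spectral radius of its family of Kraft matrices satisfies $\rho_{\mathrm{JSR}}(\mathcal{K})\le 1$.
   Context: Let $\mathcal{X}$ be a finite source alphabet, $\mathcal{W}$ a finite side-information alphabet, $\mathcal{Z}$ a finite set of $s$ states, and $\mathcal{Y}$ a finite set of binary strings (possibly including the empty string). An FS encoder with side information is given by an output function $f:\mathcal{Z}\times\mathcal{X}\times\mathcal{W}\to\mathcal{Y}$ and a next-state function $g:\mathcal{Z}\times\mathcal{X}\times\mathcal{W}\to\mathcal{Z}$. Given an initial state $z_1=z$, source symbols $x^n$ and side information $w^n$, it produces $y_i=f(z_i,x_i,w_i)$ and $z_{i+1}=g(z_i,x_i,w_i)$; write $g(z,x^n,w^n)=z_{n+1}$, let $f(z,x^n,w^n)$ be the concatenation of $y_1,\dots,y_n$ as a binary string, and $L[f(z,x^n,w^n)]=\sum_{i=1}^n L(y_i)$ where $L$ is string length. The encoder is information lossless with side information if for every $n$, the quadruple $(z_1, f(z_1,x^n,w^n), w^n, z_{n+1})$ uniquely determines $x^n\in\mathcal{X}^n$. For each $w\in\mathcal{W}$, the Kraft matrix $K(w)$ is the $s\times s$ nonnegative matrix with $[K(w)]_{zz'}=\sum_{\{x\in\mathcal{X}:\ g(z,x,w)=z'\}}2^{-L[f(z,x,w)]}$; for $w^n\in\mathcal{W}^n$, $K(w^n)=K(w_1)K(w_2)\cdots K(w_n)$; and $\mathcal{K}=\{K(w):w\in\mathcal{W}\}$. The joint spectral radius is $\rho_{\mathrm{JSR}}(\mathcal{K})=\lim_{n\to\infty}\max_{w^n\in\mathcal{W}^n}\|K(w^n)\|^{1/n}$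 for any matrix norm $\|\cdot\|$. *)

From HB Require Import structures.
From mathcomp Require Import all_boot all_order all_algebra.
From mathcomp Require Import all_classical all_reals.
From mathcomp Require Import ereal topology normedtype sequences exp.
Set Implicit Arguments. Unset Strict Implicit. Unset Printing Implicit Defensive.
Import Order.TTheory GRing.Theory Num.Theory.
Local Open Scope ring_scope.

Section FSEncoder.
Variables (X W : finType) (s : nat).
Variables (f : 'I_s -> X -> W -> seq bool) (g : 'I_s -> X -> W -> 'I_s).

Fixpoint gstar (z : 'I_s) (xw : seq (X * W)) : 'I_s :=
  if xw is (x, w) :: t then gstar (g z x w) t else z.

Fixpoint fstar (z : 'I_s) (xw : seq (X * W)) : seq bool :=
  if xw is (x, w) :: t then f z x w ++ fstar (g z x w) t else [::].

Definition info_lossless : Prop :=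
  forall (n : nat) (z : 'I_s) (xs xs' : n.-tuple X) (ws : n.-tuple W),
    fstar z (zip xs ws) = fstar z (zip xs' ws) ->
    gstar z (zip xs ws) = gstar z (zip xs' ws) ->
    xs = xs'.

Variable R : realType.

Definition kraft (w : W) : 'M[R]_s :=
  \matrix_(z, z') \sum_(x : X | g z x w == z') ((2 : R) ^+ size (f z x w))^-1.

Definition kraft_seq (ws : seq W) : 'M[R]_s :=
  foldr (fun w M => kraft w *m M) 1%:M ws.
End FSEncoder.

Definition mxnorm (R : realType) (s : nat) (M : 'M[R]_s) : R :=
  \big[Num.max/0]_(i < s) \sum_(j < s) `|M i j|.

Definition jsr_seq (X W : finType) (s : nat) (f : 'I_s -> X -> W -> seq bool)
  (g : 'I_s -> X -> W -> 'I_s) (R : realType) (n : nat) : R :=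
  (\big[Num.max/0]_(ws : n.-tuple W) mxnorm (kraft_seq f g R ws)) `^ (n%:R^-1).

(* joint spectral radius: lim_n of the above; the limit exists for any matrix
   norm (Fekete), so it coincides with the limit superior, used here. *)
Definition jsr (X W : finType) (s : nat) (f : 'I_s -> X -> W -> seq bool)
  (g : 'I_s -> X -> W -> 'I_s) (R : realType) : \bar R :=
  limn_esup (fun n => (jsr_seq f g R n)%:E).

(** The [z]-th row sum of [K(w^n)] is the Kraft sum [\sum_(x^n) 2^-|f(z,x^n,w^n)|].
    Information losslessness makes [x^n |-> (f(z,x^n,w^n), z_(n+1))] injective
    for fixed [z] and [w^n], so at most [s 2^L] source words have an output of
    length [L]; each contributes [2^-L], and output lengths are at most
    [n Lmax].  Hence [||K(w^n)|| <= s (n Lmax + 1)] grows polynomially in [n],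
    and its [n]-th root is eventually below [1 + e] for every [e > 0]. *)
From HB Require Import structures.
From mathcomp Require Import all_boot all_order all_algebra.
From mathcomp Require Import all_classical all_reals.
From mathcomp Require Import ereal topology normedtype sequences exp.
From mathcomp Require Import lra zify.
Set Implicit Arguments. Unset Strict Implicit. Unset Printing Implicit Defensive.
Import Order.TTheory GRing.Theory Num.Theory.
Local Open Scope ring_scope.

Lemma big_tupleS (R : Type) (idx : R) (op : Monoid.com_law idx)
    (T : finType) n (F : n.+1.-tuple T -> R) :
  \big[op/idx]_(t : n.+1.-tuple T) F t =
  \big[op/idx]_(x : T) \big[op/idx]_(t : n.-tuple T) F [tuple of x :: t].
Proof.
rewrite pair_big /=.
rewrite (reindex (fun p : T * n.-tuple T => [tuple of p.1 :: p.2])) //=.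
apply: onW_bij; exists (fun t : n.+1.-tuple T => (thead t, behead_tuple t)).
  by move=> [x t] /=; congr pair; apply: val_inj.
by move=> t /=; rewrite [RHS]tuple_eta.
Qed.

Section KraftSum.
Variables (R : realType) (X W : finType) (s : nat).
Variables (f : 'I_s -> X -> W -> seq bool) (g : 'I_s -> X -> W -> 'I_s).

Definition kraft_weight (b : seq bool) : R := ((2 : R) ^+ size b)^-1.

Definition kraft_sum (z : 'I_s) (ws : seq W) n : R :=
  \sum_(xs : n.-tuple X) kraft_weight (fstar f g z (zip xs ws)).

Lemma kraft_seq_ge0 ws i j : 0 <= kraft_seq f g R ws i j.
Proof.
elim: ws i j => [|w ws IH] i j /=; first by rewrite mxE ler0n.
rewrite mxE; apply: sumr_ge0 => k _; apply: mulr_ge0 => //.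
by rewrite mxE; apply: sumr_ge0 => x _; rewrite invr_ge0 exprn_ge0.
Qed.

Lemma kraft_seq_row_sum n (ws : n.-tuple W) z :
  \sum_z' kraft_seq f g R ws z z' = kraft_sum z ws n.
Proof.
rewrite /kraft_sum; elim: n ws z => [|n IH] ws z.
  rewrite tuple0 /= (bigD1 z) //= big1 => [|z' /negPf z'z]; last first.
    by rewrite mxE eq_sym z'z.
  rewrite mxE eqxx addr0 (eq_bigr (fun=> 1)) => [|xs _]; last first.
    by rewrite (tuple0 xs) /kraft_weight expr0 invr1.
  by rewrite sumr_const card_tuple.
rewrite [ws]tuple_eta /=; set w := thead ws.
under eq_bigr => z' _ do rewrite mxE.
rewrite exchange_big /=.
under eq_bigr => y _ do
  rewrite -mulr_sumr (IH (behead_tuple ws)) mxE mulr_suml big_mkcond /=.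
rewrite exchange_big big_tupleS; apply: eq_bigr => x _.
rewrite -big_mkcond (big_pred1 (g z x w)) => [|z']; last by rewrite eq_sym.
rewrite mulr_sumr; apply: eq_bigr => t _ /=.
by rewrite /kraft_weight size_cat exprD invfM.
Qed.

Definition max_output_size : nat :=
  \max_(p : 'I_s * X * W) size (f p.1.1 p.1.2 p.2).

Lemma size_fstar z xw : (size (fstar f g z xw) <= size xw * max_output_size)%N.
Proof.
elim: xw z => [|[x w] t IH] z //=.
rewrite size_cat mulSn leq_add ?IH //.
exact: (leq_bigmax_cond ((z, x), w)).
Qed.

Hypothesis lossless : info_lossless f g.

Lemma card_fstar_size_eq n (ws : n.-tuple W) z L :
  (#|[pred xs : n.-tuple X | size (fstar f g z (zip xs ws)) == L]| <= 2 ^ L * s)%N.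
Proof.
pose code (xs : n.-tuple X) :=
  (insubd (nseq_tuple L false) (fstar f g z (zip xs ws)), gstar g z (zip xs ws)).
have := @leq_card_in _ (L.-tuple bool * 'I_s)%type code
  [pred xs : n.-tuple X | size (fstar f g z (zip xs ws)) == L].
rewrite card_prod card_tuple card_bool card_ord; apply.
move=> xs1 xs2 /eqP size1 /eqP size2 [code1 code2].
apply: (lossless _ code2).
by have := congr1 val code1; rewrite !val_insubd size1 size2 eqxx.
Qed.

Lemma kraft_sum_le n (ws : n.-tuple W) z :
  kraft_sum z ws n <= (s * (n * max_output_size).+1)%:R.
Proof.
set M := (n * max_output_size)%N.
set size_of := fun xs : n.-tuple X => size (fstar f g z (zip xs ws)).
have size_le xs : (size_of xs < M.+1)%N.
  by have := size_fstar z (zip xs ws); rewrite size_zip !size_tuple minnn.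
have -> : (s * M.+1)%:R = \sum_(L < M.+1) (s%:R : R).
  by rewrite sumr_const card_ord natrM mulr_natr.
rewrite /kraft_sum (partition_big (fun xs => Ordinal (size_le xs)) predT) //=.
apply: ler_sum => L _.
rewrite (eq_bigl [pred xs | size_of xs == L]) => [|xs]; last by rewrite -val_eqE.
rewrite (eq_bigr (fun=> ((2 : R) ^+ L)^-1)) => [|xs /eqP <-] //.
rewrite sumr_const -[_ *+ #|_|]mulr_natr.
apply: (@le_trans _ _ (((2 : R) ^+ L)^-1 * (2 ^ L * s)%:R)).
  by apply: ler_wpM2l; rewrite ?invr_ge0 ?exprn_ge0 // ler_nat card_fstar_size_eq.
by rewrite natrM natrX mulrA mulVf ?mul1r // expf_neq0.
Qed.

Lemma mxnorm_kraft_seq_le n (ws : n.-tuple W) :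
  mxnorm (kraft_seq f g R ws) <= (s * (n * max_output_size).+1)%:R.
Proof.
apply: bigmax_le => [|z _]; first exact: ler0n.
under eq_bigr => z' _ do rewrite ger0_norm ?kraft_seq_ge0 //.
by rewrite kraft_seq_row_sum kraft_sum_le.
Qed.

Lemma jsr_seq_le n :
  jsr_seq f g R n <= (s * (n * max_output_size).+1)%:R `^ n%:R^-1.
Proof.
apply: ge0_ler_powR; rewrite ?nnegrE ?invr_ge0 ?ler0n //.
  by apply: bigmax_ge_id.
apply: bigmax_le => [|ws _]; first exact: ler0n.
exact: mxnorm_kraft_seq_le.
Qed.

End KraftSum.

Lemma bin2_mul_le_expr (R : realDomainType) (e : R) n :
  0 <= e -> e ^+ 2 *+ 'C(n, 2) <= (1 + e) ^+ n.
Proof.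
move=> e_ge0; have [n_lt2|n_ge2] := ltnP n 2.
  by rewrite bin_small // mulr0n exprn_ge0 // addr_ge0.
rewrite exprDn (bigD1 (Ordinal (n_ge2 : (2 < n.+1)%N))) //= expr1n mul1r lerDl.
by apply: sumr_ge0 => i _; rewrite mulrn_wge0 // mulr_ge0 ?exprn_ge0.
Qed.

Lemma mul_bin2_2 n : ('C(n, 2) * 2 = n * n.-1)%N.
Proof.
rewrite bin2 muln2 halfK oddM; case: n => //= n.
by rewrite andNb subn0.
Qed.

Lemma natr_poly_le_expr (R : realType) (e : R) (c a : nat) : 0 < e ->
  exists N, forall n, (N <= n)%N -> (c * (n * a).+1)%:R <= (1 + e) ^+ n.
Proof.
move=> e_gt0; set K : R := (c * a.+1)%:R.
have e2_gt0 : 0 < e ^+ 2 by rewrite exprn_gt0.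
exists (Num.truncn (2 * K / e ^+ 2)).+2 => n n_ge.
have bin2E : e ^+ 2 *+ 'C(n, 2) * 2 = n%:R * (n%:R - 1) * e ^+ 2.
  rewrite -mulr_natr -mulrA -natrM mul_bin2_2 natrM mulrC.
  by case: n n_ge => // n _; rewrite /= -natr1 addrK.
have n_ge1 : 1 <= n%:R :> R by rewrite ler1n (leq_ltn_trans (leq0n _) n_ge).
have n_large : 2 * K <= (n%:R - 1) * e ^+ 2.
  rewrite -ler_pdivrMr //; have := truncnS_gt (2 * K / e ^+ 2).
  have : (Num.truncn (2 * K / e ^+ 2)).+2%:R <= n%:R :> R by rewrite ler_nat.
  rewrite -natr1; lra.
have lin_bound : (c * (n * a).+1)%:R <= K * n%:R.
  by rewrite -natrM ler_nat; nia.
have quad_bound := bin2_mul_le_expr n (ltW e_gt0).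
have K_ge0 : 0 <= K by rewrite ler0n.
(* [c (n a + 1) <= K n <= n (n - 1) e^2 / 2 = e^2 'C(n, 2) <= (1 + e)^n] *)
nra.
Qed.

Lemma expr_powR_inv (R : realType) (a : R) n :
  0 <= a -> (0 < n)%N -> (a ^+ n) `^ n%:R^-1 = a.
Proof.
move=> a_ge0 n_gt0.
by rewrite -powR_mulrn // -powRrM mulfV ?powRr1 // pnatr_eq0 -lt0n.
Qed.

Theorem theorem3 (R : realType) (X W : finType) (s : nat)
  (f : 'I_s -> X -> W -> seq bool) (g : 'I_s -> X -> W -> 'I_s) :
  info_lossless f g -> (jsr f g R <= 1)%E.
Proof.
move=> lossless; rewrite /jsr limn_esup_lim; apply/lee_addgt0Pr => e e_gt0.
set L := max_output_size f.
apply: lime_le; first exact: is_cvg_esups.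
have [N poly_le] := natr_poly_le_expr s L e_gt0.
near=> m; apply: ge_ereal_sup => _ [n /= m_le_n <-].
have n_ge : (N.+1 <= n)%N by rewrite (leq_trans _ m_le_n) //; near: m; exists N.+1.
rewrite -EFinD lee_fin; apply: le_trans (jsr_seq_le R lossless n) _.
have n_inv_ge0 : 0 <= n%:R^-1 :> R by rewrite invr_ge0 ler0n.
have e1_ge0 : 0 <= 1 + e by rewrite addr_ge0 // ltW.
apply: le_trans (ge0_ler_powR n_inv_ge0 _ _ (poly_le n (ltnW n_ge))) _;
  rewrite ?nnegrE ?exprn_ge0 ?ler0n //.
by rewrite expr_powR_inv // (leq_ltn_trans (leq0n N) n_ge).
Unshelve. all: by end_near.
Qed.
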